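(* Let $T \geq 1$, let $\mathbf{u}$ be an input, and let $h_1, \dots, h_T$ be deterministic functions, where $h_t$ takes as arguments $\mathbf{u}$ and states $\mathbf{s}_1, \dots, \mathbf{s}_{t-1}$ and returns a state. Let $\mathbf{s}^*_1, \dots, \mathbf{s}^*_T$ be the values produced by feedforward computation, i.e. $\mathbf{s}^*_t = h_t(\mathbf{u}, \mathbf{s}^*_{1:t-1})$ for $t = 1, \dots, T$. Let $\mathcal{B}_1 = [\![a_1,b_1]\!], \dots, \mathcal{B}_M = [\![a_M,b_M]\!]$ be integer intervals partitioning $\{1, \dots, T\}$, listed in increasing order ($a_1 = 1$, $a_{i+1} = b_i + 1$, $b_M = T$). Let $\epsilon \ge 0$ and consider the two algorithms: (Jacobi-Gauss-Seidel) Initialize arbitrary $\mathbf{s}^0_1,\dots,\mathbf{s}^0_T$, set $k \gets 0$; repeat { $k \gets k+1$; for all $i = 1,\dots,M$ in parallel, with $[\![a,b]\!] = \mathcal{B}_i$, for $j = a, a+1, \dots, b$ sequentially set $\mathbf{s}^k_j \gets h_j(\mathbf{u}, \mathbf{s}^{k-1}_{1:a-1}, \mathbf{s}^k_{a:j-1})$ } until $k = M$ or $\|\mathbf{s}^k_{1:T} - \mathbf{s}^{k-1}_{1:T}\| < \epsilon$; return $\mathbf{s}^k_1, \dots, \mathbf{s}^k_T$. (Gauss-Seidel-Jacobi) Initialize $\mathbf{s}_1, \dots, \mathbf{s}_T$ arbitrarily; for $i = 1, \dots, M$ sequentially: with $[\![a,b]\!] = \mathcal{B}_i$, initialize arbitrary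 $\mathbf{s}^0_j$ for $j \in \mathcal{B}_i$ and set $k \gets 0$; repeat { $k \gets k+1$; for all $j \in \mathcal{B}_i$ in parallel set $\mathbf{s}^k_j \gets h_j(\mathbf{u}, \mathbf{s}_{1:a-1}, \mathbf{s}^{k-1}_{a:j-1})$ } until $k = |\mathcal{B}_i|$ or $\|\mathbf{s}^k_{\mathcal{B}_i} - \mathbf{s}^{k-1}_{\mathcal{B}_i}\| < \epsilon$; then set $\mathbf{s}_{\mathcal{B}_i} \gets \mathbf{s}^k_{\mathcal{B}_i}$. Finally return $\mathbf{s}_1, \dots, \mathbf{s}_T$. If $\epsilon = 0$, then for any initialization both algorithms converge and return $\mathbf{s}^*_1, \dots, \mathbf{s}^*_T$, the same values as obtained by feedforward computation.
   Context: Notation: $\mathbf{s}_{a:b}$ denotes $\mathbf{s}_a, \dots, \mathbf{s}_b$ (empty if $b<a$); $[\![a,b]\!] = \{a, a+1, \dots, b\}$; $\mathbf{s}_{\mathcal{B}}$ denotes $\{\mathbf{s}_i : i \in \mathcal{B}\}$. States lie in normed vector spaces and $\|\cdot\|$ is a norm on the relevant collection of states. *)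

From mathcomp Require Import all_boot all_order all_algebra.
Set Implicit Arguments. Unset Strict Implicit. Unset Printing Implicit Defensive.
Import Order.TTheory GRing.Theory Num.Theory.
Local Open Scope ring_scope.

(* States are indexed by positive naturals t = 1, 2, ...; the state s_t lives
   in the additive group S t.  A "collection of states" is a dependent function
   x : forall l, S l (only entries 1..T are meaningful).
   h t v x is the function h_t(v, x_{1:t-1}); that it depends only on x_1..x_{t-1}
   is a hypothesis of the theorem.
   Nrm B x is the norm of the sub-collection x_B (B a list of indices). *)

Section Algorithms.
Variables (R : numDomainType) (S : nat -> zmodType) (U : Type).
Variable h : forall t : nat, U -> (forall l, S l) -> S t.
Variable Nrm : seq nat -> (forall l, S l) -> R.
Variables (u : U) (eps : R) (T M : nat) (a b : nat -> nat).

Local Notation state := (forall l : nat, S l).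

Definition interval (p q : nat) : seq nat := iota p (q.+1 - p).

Definition sdiff (y x : state) : state := fun l => y l - x l.

Definition overwrite (p q : nat) (y x : state) : state :=
  fun l => if (p <= l <= q)%N then y l else x l.

(* one block [[p,q]], sequential inside: s^k_j <- h_j(u, s^{k-1}_{1:p-1}, s^k_{p:j-1}),
   x = s^{k-1} *)
Definition jgs_block (x : state) (p q : nat) : state :=
  foldl (fun z j => @dfwith nat S z j
            (h j u (fun l => if (l < p)%N then x l else z l)))
        x (interval p q).

(* all blocks in parallel (each reads only s^{k-1} on indices before it) *)
Definition jgs_sweep (x : state) : state :=
  foldl (fun y i => overwrite (a i) (b i) (jgs_block x (a i) (b i)) y)
        x (iota 1 M).

(* repeat ... until k = M or ||s^k_{1:T} - s^{k-1}_{1:T}|| < eps ;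
   fuel = number of iterations still allowed *)
Fixpoint jgs_loop (fuel : nat) (x : state) : state :=
  match fuel with
  | 0%N => x
  | n.+1 => let y := jgs_sweep x in
            if Nrm (interval 1 T) (sdiff y x) < eps then y else jgs_loop n y
  end.

Definition JGS (s0 : state) : state := jgs_loop M s0.

(* parallel Jacobi step on block [[p,q]]:
   s^k_j <- h_j(u, s_{1:p-1}, s^{k-1}_{p:j-1}),  z = s^{k-1} *)
Definition gsj_step (s : state) (p q : nat) (z : state) : state :=
  fun l => if (p <= l <= q)%N
           then h l u (fun m => if (m < p)%N then s m else z m)
           else z l.

Fixpoint gsj_loop (s : state) (p q : nat) (fuel : nat) (z : state) : state :=
  match fuel with
  | 0%N => z
  | n.+1 => let y := gsj_step s p q z in
            if Nrm (interval p q) (sdiff y z) < eps then y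
            else gsj_loop s p q n y
  end.

(* s0 : initial s ; z0 i : the arbitrary initialization s^0 used for block i *)
Definition GSJ (s0 : state) (z0 : nat -> state) : state :=
  foldl (fun s i =>
           overwrite (a i) (b i)
             (gsj_loop s (a i) (b i) ((b i).+1 - a i) (z0 i)) s)
        s0 (iota 1 M).

End Algorithms.

From mathcomp Require Import all_boot all_order all_algebra.
From mathcomp Require Import zify.
Import Order.TTheory GRing.Theory Num.Theory.

Set Implicit Arguments.
Unset Strict Implicit.
Unset Printing Implicit Defensive.

(* With [eps = 0] the stopping tests never fire, so both algorithms simply
   iterate their sweeps the maximal number of times.  Since [h_t] only reads
   [s_1, ..., s_{t-1}], a correct prefix [s_{1:m-1} = s*_{1:m-1}] makes every
   update of index [m] produce [s*_m].  Hence each Jacobi-Gauss-Seidel sweep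
   extends the correct prefix by (at least) one whole block, and each Jacobi
   iteration inside a Gauss-Seidel-Jacobi block extends it by one index; [M]
   sweeps, resp. [|B_i|] iterations per block, are therefore enough. *)

Definition agree_on (S : nat -> Type) (p q : nat) (x y : forall l, S l) : Prop :=
  forall l, p <= l < q -> x l = y l.

Lemma agree_on_cat (S : nat -> Type) (p m q : nat) (x y : forall l, S l) :
  agree_on p m x y -> agree_on m q x y -> agree_on p q x y.
Proof.
by move=> xy1 xy2 l /andP[pl lq]; case: (ltnP l m) => lm; [apply: xy1 | apply: xy2]; lia.
Qed.

Lemma iota_rcons m n : iota m n.+1 = rcons (iota m n) (m + n).
Proof. by rewrite -cats1 -addn1 iotaD. Qed.

Section StoppingRule.

Variables (R : numDomainType) (S : nat -> zmodType) (U : Type).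
Variable h : forall t : nat, U -> (forall l, S l) -> S t.
Variable Nrm : seq nat -> (forall l, S l) -> R.
Variables (u : U) (eps : R).
Hypothesis eps_le_Nrm : forall B x, (eps <= Nrm B x)%R.

Lemma jgs_loop_iter T M a b n x :
  jgs_loop h Nrm u eps T M a b n x = iter n (jgs_sweep h u M a b) x.
Proof. by elim: n x => [|n IHn] x //=; rewrite le_gtF // IHn -iterSr. Qed.

Lemma gsj_loop_iter s p q n z :
  gsj_loop h Nrm u eps s p q n z = iter n (gsj_step h u s p q) z.
Proof. by elim: n z => [|n IHn] z //=; rewrite le_gtF // IHn -iterSr. Qed.

End StoppingRule.

Section Feedforward.

Variables (S : nat -> zmodType) (U : Type) (T : nat) (u : U).
Variable h : forall t : nat, U -> (forall l, S l) -> S t.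
Variable sstar : forall l, S l.
Hypothesis h_causal : forall t v x y, agree_on 1 t x y -> h t v x = h t v y.
Hypothesis sstar_feedforward : forall t, 1 <= t <= T -> sstar t = h t u sstar.

Local Notation state := (forall l : nat, S l).

Lemma h_sstar t (x : state) :
  1 <= t <= T -> agree_on 1 t x sstar -> h t u x = sstar t.
Proof. by move=> tT xt; rewrite sstar_feedforward // (h_causal _ xt). Qed.

Lemma agree_on_splice p m (x z : state) :
  agree_on 1 p x sstar -> agree_on p m z sstar ->
  agree_on 1 m (fun l => if l < p then x l else z l) sstar.
Proof. by move=> xp zpm l lm; case: ifP => lp; [apply: xp | apply: zpm]; lia. Qed.

Definition jgs_update (x : state) (p : nat) (z : state) (j : nat) : state :=
  dfwith z (h j u (fun l => if l < p then x l else z l)).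

Lemma jgs_block_correct (x : state) p q :
  0 < p -> q <= T -> agree_on 1 p x sstar ->
  agree_on p q.+1 (jgs_block h u x p q) sstar.
Proof.
move=> p_gt0 qT xp.
suff fold_ok n m z : p <= m -> m + n <= q.+1 -> agree_on p m z sstar ->
    agree_on p (m + n) (foldl (jgs_update x p) z (iota m n)) sstar.
  move=> l pl; apply: (@fold_ok (q.+1 - p) p); [lia | lia | by move=> ?; lia | lia].
elim: n m z => [|n IHn] m z pm mnq zpm /=; first by rewrite addn0.
rewrite -addSnnS; apply: IHn; [lia | lia |] => l /andP[pl lm].
rewrite /jgs_update; case: (eqVneq m l) => [<- | ml].
  by rewrite dfwith_in; apply: h_sstar; [lia | apply: agree_on_splice].
by rewrite dfwith_out //; apply: zpm; move/eqP: ml; lia.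
Qed.

Lemma gsj_step_correct (s z : state) p q m :
  0 < p -> q <= T -> m <= q -> agree_on 1 p s sstar -> agree_on p m z sstar ->
  agree_on p m.+1 (gsj_step h u s p q z) sstar.
Proof.
move=> p_gt0 qT mq sp zpm l /andP[pl lm]; rewrite /gsj_step.
case: ifP => [_ | /negP]; last lia.
by apply: h_sstar; [lia | apply: agree_on_splice sp (agree_on_cat zpm _) => l' ?; lia].
Qed.

Lemma gsj_block_correct (s z : state) p q :
  0 < p -> q <= T -> agree_on 1 p s sstar ->
  agree_on p q.+1 (iter (q.+1 - p) (gsj_step h u s p q) z) sstar.
Proof.
move=> p_gt0 qT sp.
suff iter_ok n : n <= q.+1 - p -> agree_on p (p + n) (iter n (gsj_step h u s p q) z) sstar.
  by move=> l pl; apply: (@iter_ok (q.+1 - p)) => //; lia.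
elim: n => [|n IHn] nq /=; first by move=> l; lia.
by rewrite addnS; apply: gsj_step_correct => //; [lia | apply: IHn; lia].
Qed.

Section Blocks.

Variables (M : nat) (a b : nat -> nat).
Hypotheses (M_gt0 : 0 < M) (a1 : a 1 = 1) (b_last : b M = T).
Hypothesis a_next : forall i, 1 <= i < M -> a i.+1 = (b i).+1.
Hypothesis a_le_b : forall i, 1 <= i <= M -> a i <= b i.

(* Block [i] is the half-open range [[block_end i.-1, block_end i)]. *)
Definition block_end (n : nat) : nat := if n is 0 then 1 else (b n).+1.

Lemma block_start i : i < M -> a i.+1 = block_end i.
Proof. by case: i => [|i] iM //=; rewrite a_next //; lia. Qed.

Lemma block_start_gt0 i : 0 < i <= M -> 0 < a i.
Proof. by case: i => [|i] /andP[_ iM] //; rewrite block_start //; case: i {iM}. Qed.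

Lemma block_end_mono i j : i <= j <= M -> block_end i <= block_end j.
Proof.
elim: j => [|j IHj] /andP[ij jM]; first by move: ij; rewrite leqn0 => /eqP->.
case: (ltnP j i) => [ji | ij']; first by have -> : i = j.+1 by lia.
have /= := @a_le_b j.+1; rewrite block_start //; have := IHj; lia.
Qed.

Lemma block_end_last : block_end M = T.+1.
Proof. by case: M M_gt0 b_last => //= n _ ->. Qed.

Lemma block_le_last i : 0 < i <= M -> b i <= T.
Proof.
by case: i => [|i] iM //; have := @block_end_mono i.+1 M; rewrite block_end_last /=; lia.
Qed.

Lemma blocks_disjoint i j : 0 < i -> i < j <= M -> b i < a j.
Proof.
case: j => [|j] i0 ijM //; rewrite block_start; last lia.
by case: i i0 ijM => // i _ ijM; have /= := @block_end_mono i.+1 j; lia.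
Qed.

Lemma blocks_cover n l : n <= M -> 0 < l < block_end n ->
  exists2 i, 0 < i <= n & a i <= l <= b i.
Proof.
elim: n => [|n IHn] nM ln; first by move: ln => /=; lia.
case: (ltnP l (block_end n)) => lbn.
  by have [|i ni il] := IHn (ltnW nM); [lia | exists i => //; lia].
exists n.+1; first by rewrite leqnn.
by rewrite block_start //; move: ln => /=; lia.
Qed.

Lemma foldl_overwrite_blocks (G : nat -> state) (y0 : state) n i l :
  n <= M -> 0 < i <= n -> a i <= l <= b i ->
  foldl (fun y i => overwrite (a i) (b i) (G i) y) y0 (iota 1 n) l = G i l.
Proof.
elim: n => [|n IHn] nM iN il; first by lia.
rewrite iota_rcons foldl_rcons {1}/overwrite add1n.
case: ifP => ln; case: (ltnP i n.+1) => iN'.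
- by have := @blocks_disjoint i n.+1; lia.
- by have -> : i = n.+1 by lia.
- by apply: IHn; lia.
- have eq_i : i = n.+1 by lia.
  by rewrite eq_i ln in il.
Qed.

Lemma jgs_sweep_correct k (x : state) : k < M ->
  agree_on 1 (block_end k) x sstar ->
  agree_on 1 (block_end k.+1) (jgs_sweep h u M a b x) sstar.
Proof.
move=> kM xk l lk.
have [i ik il] := blocks_cover kM lk.
rewrite /jgs_sweep (foldl_overwrite_blocks _ _ (leqnn M) _ il); last lia.
have a_i : a i = block_end i.-1 by case: i ik {il} => // i ik; rewrite block_start //; lia.
have iM : 0 < i <= M by lia.
apply: (jgs_block_correct (block_start_gt0 iM) (block_le_last iM)); last lia.
by move=> l' /andP[l'1 l'a]; apply: xk; have := @block_end_mono i.-1 k; lia.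
Qed.

Lemma jgs_iter_correct n (x : state) : n <= M ->
  agree_on 1 (block_end n) (iter n (jgs_sweep h u M a b) x) sstar.
Proof.
elim: n => [|n IHn] nM /=; first by move=> l; lia.
by apply: jgs_sweep_correct => //; apply: IHn; lia.
Qed.

Variables (R : numDomainType) (Nrm : seq nat -> state -> R) (eps : R).
Hypothesis eps_le_Nrm : forall B x, (eps <= Nrm B x)%R.

Lemma JGS_feedforward (s0 : state) :
  agree_on 1 T.+1 (JGS h Nrm u eps T M a b s0) sstar.
Proof. by rewrite -block_end_last /JGS jgs_loop_iter //; apply: jgs_iter_correct. Qed.

Lemma GSJ_feedforward (s0 : state) (z0 : nat -> state) :
  agree_on 1 T.+1 (GSJ h Nrm u eps M a b s0 z0) sstar.
Proof.
rewrite -block_end_last /GSJ; move: (leqnn M).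
elim: {-2}M => [|n IHn] nM; first by move=> l /=; lia.
rewrite iota_rcons foldl_rcons add1n => l ln; rewrite /overwrite.
have a_n : a n.+1 = block_end n by rewrite block_start.
case: ifP => [lb | /negbT lb].
  rewrite gsj_loop_iter //; apply: gsj_block_correct; [| exact: block_le_last | | lia].
    by rewrite a_n; case: (n).
  by rewrite a_n; apply: IHn; lia.
by apply: IHn; [lia | move: ln lb => /=; rewrite a_n; lia].
Qed.

End Blocks.
End Feedforward.

Local Open Scope ring_scope.

Theorem proposition2 (R : numDomainType) (S : nat -> zmodType) (U : Type)
  (T : nat) (u : U) (h : forall t : nat, U -> (forall l, S l) -> S t)
  (sstar : forall l, S l) (M : nat) (a b : nat -> nat)
  (Nrm : seq nat -> (forall l, S l) -> R) :
  (1 <= T)%N ->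
  (* h_t depends only on its input and on s_1, ..., s_{t-1} *)
  (forall t v (x y : forall l, S l),
      (forall l, (1 <= l < t)%N -> x l = y l) -> h t v x = h t v y) ->
  (* feedforward values *)
  (forall t, (1 <= t <= T)%N -> sstar t = h t u sstar) ->
  (* the blocks [[a_i, b_i]], i = 1..M, partition [[1, T]] in increasing order *)
  (0 < M)%N -> a 1%N = 1%N ->
  (forall i, (1 <= i < M)%N -> a i.+1 = (b i).+1) -> b M = T ->
  (forall i, (1 <= i <= M)%N -> (a i <= b i)%N) ->
  (* the norm on collections of states is nonnegative *)
  (forall B x, 0 <= Nrm B x) ->
  (forall s0 : forall l, S l, forall t, (1 <= t <= T)%N ->
      JGS h Nrm u 0 T M a b s0 t = sstar t) /\
  (forall (s0 : forall l, S l) (z0 : nat -> forall l, S l) t, (1 <= t <= T)%N ->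
      GSJ h Nrm u 0 M a b s0 z0 t = sstar t).
Proof.
(* [1 <= T] is implied by the block hypotheses. *)
move=> _ h_causal sstar_ff M_gt0 a1 a_next b_last a_le_b Nrm_ge0.
split=> [s0 | s0 z0] t tT.
- exact: (JGS_feedforward h_causal sstar_ff M_gt0 a1 b_last a_next a_le_b Nrm_ge0).
- exact: (GSJ_feedforward h_causal sstar_ff M_gt0 a1 b_last a_next a_le_b Nrm_ge0).
Qed.
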